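(* Let $(l_n)$ and $(k_n)$ be sequences of positive integers such that $$\lim_{n\to\infty}\Big(1-\frac{1}{2^{l_n}}\Big)^{k_n}=1\quad\text{and}\quad \lim_{n\to\infty}\frac{k_nl_n}{2^{l_n}}=\infty.$$ Then the sequence of functions $f_n:\{-1,1\}^{l_nk_n}\to\{-1,0,1\}$, $f_n(\omega):=\mathsf{Tribes}(l_n,k_n)(\omega)-\mathsf{Tribes}(l_n,k_n)(-\omega)$, is bribable. Moreover, there is a sequence of positive integers $a_n\to\infty$ such that $\mathbb{P}[|\mathscr{P}_n|>a_n]\to1$, where $\mathscr{P}_n$ is the pivotal set of $\mathsf{Tribes}(l_n,k_n)$.
   Context: $\{-1,1\}^{m}$ carries the uniform product measure $\mathbb{P}$, $\omega$ uniform. $\mathsf{Tribes}(l,k):\{-1,1\}^{lk}\to\{0,1\}$: the $lk$ coordinates are partitioned into $k$ disjoint blocks (''tribes'') of $l$ elements each; $\mathsf{Tribes}(l,k)(\omega)=1$ if there is a tribe $T$ with $\omega(i)=1$ for all $i\in T$, and $0$ otherwise. For $i$ a coordinate, $\omega^i$ is $\omega$ with the $i$-th coordinate flipped; the pivotal set of a function $g$ is $\{i: g(\omega)\neq g(\omega^i)\}$. A function $f$ on $\{-1,1\}^m$ is transitive if there is a group of permutations of the coordinates acting transitively under which $f$ is invariant. A sequence $f_n:\{-1,1\}^{m_n}\to\{-1,0,1\}$ is called bribable if: (1) each $f_n$ is transitive; (2) $\lim_n\mathbb{P}[f_n=0]=1$; (3) $\lim_n\mathbb{P}[\exists\, i,j\in[m_n]: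 f_n(\omega^i)=1\text{ and }f_n(\omega^j)=-1]=1$. *)

From HB Require Import structures.
From mathcomp Require Import all_boot all_order all_algebra all_fingroup.
From mathcomp Require Import all_classical all_reals all_analysis.
Set Implicit Arguments. Unset Strict Implicit. Unset Printing Implicit Defensive.
Import Order.TTheory GRing.Theory Num.Theory.
Import numFieldNormedType.Exports.

(* A point omega of {-1,1}^m is encoded as omega : {ffun 'I_m -> bool},
   with true <-> +1 and false <-> -1. *)
Notation cube m := {ffun 'I_m -> bool}.

Local Open Scope ring_scope.
Local Open Scope classical_set_scope.

Definition prob (R : realType) (m : nat) (A : pred (cube m)) : R :=
  (#|A|%:R / #|{: cube m}|%:R).

Definition flip (m : nat) (w : cube m) (i : 'I_m) : cube m :=
  [ffun j => if j == i then ~~ w j else w j].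

Definition negw (m : nat) (w : cube m) : cube m := [ffun j => ~~ w j].

Definition tribes (l k : nat) (w : cube (l * k)) : bool :=
  [exists j : 'I_k, [forall i : 'I_(l * k), ((i %/ l)%N == j) ==> w i]].

Definition pivotal {T : eqType} (m : nat) (g : cube m -> T) (w : cube m)
  : {set 'I_m} := [set i | g w != g (flip w i)].

Definition transitive_fun {T : Type} (m : nat) (f : cube m -> T) : Prop :=
  exists G : {group {perm 'I_m}},
    [transitive G, on [set: 'I_m]%SET | 'P] /\
    forall s, s \in G -> forall w : cube m, f [ffun i => w (s i)] = f w.

Definition bribable (R : realType) (m : nat -> nat)
  (f : forall n, cube (m n) -> int) : Prop :=
  [/\ forall n, transitive_fun (f n),
      (fun n => prob R (fun w => f n w == 0%R)) @ \oo --> (1 : R)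
    & (fun n => prob R (fun w =>
          [exists i, exists j, (f n (flip w i) == 1%R) && (f n (flip w j) == (-1)%R)]))
        @ \oo --> (1 : R)].

Definition tribes_diff (l k : nat) (w : cube (l * k)) : int :=
  (tribes w)%:Z - (tribes (negw w))%:Z.

From HB Require Import structures.
From mathcomp Require Import all_boot all_order all_algebra all_fingroup.
From mathcomp Require Import all_classical all_reals all_analysis.
From mathcomp Require Import lra.
Import Order.TTheory GRing.Theory Num.Theory.
Import numFieldNormedType.Exports.
Local Open Scope ring_scope.
Local Open Scope classical_set_scope.
Set Implicit Arguments. Unset Strict Implicit. Unset Printing Implicit Defensive.

(* If a tribe contains exactly one zero, flipping that zero fills the tribe;
   so, for a point without full tribe, each such zero is pivotal for Tribes.
   A given tribe is full with probability 2^-l and has exactly one zero with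
   probability l 2^-l, independently over tribes.  By the first hypothesis,
   w.h.p. neither w nor -w has a full tribe; by the second and Bernoulli's
   inequality, w.h.p. both have a tribe with exactly one zero, and flipping
   these two zeros gives f = 1 and f = -1.  Sorting the tribes into A residue
   classes, some class has no tribe with exactly one zero with probability at
   most A (1 - l 2^-l)^(k/A) <= 1/A once A^4 <= k l 2^-l; otherwise there are
   at least A pivotal coordinates.  Transitivity comes from the permutations
   preserving the partition into tribes. *)

Section TribeCoordinates.
Variables l k : nat.
Local Open Scope nat_scope.

Lemma tribe_index_subproof (j : 'I_k) (b : 'I_l) : j * l + b < l * k.
Proof.
apply: (@leq_trans (j.+1 * l)); first by rewrite mulSnr ltn_add2l.
by rewrite mulnC leq_mul2l ltn_ord orbT.
Qed.

Definition tribe_index (j : 'I_k) (b : 'I_l) : 'I_(l * k) :=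
  Ordinal (tribe_index_subproof j b).

Lemma tribe_size_gt0 (i : 'I_(l * k)) : 0 < l.
Proof. by case: l i => [|//] []. Qed.

Lemma tribe_of_subproof (i : 'I_(l * k)) : i %/ l < k.
Proof. by rewrite ltn_divLR ?(tribe_size_gt0 i) // [k * l]mulnC. Qed.

Lemma tribe_pos_subproof (i : 'I_(l * k)) : i %% l < l.
Proof. by rewrite ltn_pmod ?(tribe_size_gt0 i). Qed.

Definition tribe_of (i : 'I_(l * k)) : 'I_k := Ordinal (tribe_of_subproof i).
Definition tribe_pos (i : 'I_(l * k)) : 'I_l := Ordinal (tribe_pos_subproof i).

Lemma tribe_of_index j b : tribe_of (tribe_index j b) = j.
Proof.
have l_gt0 : 0 < l by case: l b => [[]|].
by apply: val_inj; rewrite /= divnMDl // divn_small // addn0.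
Qed.

Lemma tribe_pos_index j b : tribe_pos (tribe_index j b) = b.
Proof. by apply: val_inj; rewrite /= modnMDl modn_small. Qed.

Lemma tribe_index_of i : tribe_index (tribe_of i) (tribe_pos i) = i.
Proof. by apply: val_inj; rewrite /= -divn_eq. Qed.

Definition tribe_bits (w : cube (l * k)) (j : 'I_k) : cube l :=
  [ffun b => w (tribe_index j b)].

Definition tribes_join (W : {ffun 'I_k -> cube l}) : cube (l * k) :=
  [ffun i => W (tribe_of i) (tribe_pos i)].

Lemma tribe_bits_join W j : tribe_bits (tribes_join W) j = W j.
Proof. by apply/ffunP => b; rewrite !ffunE tribe_of_index tribe_pos_index. Qed.

Lemma tribes_joinK w : tribes_join [ffun j => tribe_bits w j] = w.
Proof. by apply/ffunP => i; rewrite !ffunE tribe_index_of. Qed.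

Lemma card_tribes_family (F : 'I_k -> pred (cube l)) :
  #|[pred w : cube (l * k) | [forall j, F j (tribe_bits w j)]]| = \prod_j #|F j|.
Proof.
have join_inj : injective tribes_join.
  by move=> W W' /(congr1 tribe_bits) eW; apply/ffunP => j; rewrite -!tribe_bits_join eW.
have -> : \prod_j #|F j| = foldr muln 1 [seq #|F j| | j : 'I_k].
  by rewrite foldrE big_map big_enum.
rewrite -(card_family F) -(fintype.card_image join_inj (family F)).
apply: eq_card => w; rewrite !inE -[w]tribes_joinK fintype.mem_image // inE.
by apply/forallP/familyP => F_w j; move: (F_w j); rewrite tribe_bits_join ffunE.
Qed.

End TribeCoordinates.

Arguments tribe_of {l k}.
Arguments tribe_pos {l k}.
Arguments tribe_bits {l k}.

Section Cube.
Variable m : nat.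

Lemma card_cube : #|{: cube m}| = (2 ^ m)%N.
Proof. by rewrite card_ffun card_bool card_ord. Qed.

Lemma negwK : involutive (@negw m).
Proof. by move=> w; apply/ffunP => i; rewrite !ffunE negbK. Qed.

Lemma flip_negw (w : cube m) i : flip (negw w) i = negw (flip w i).
Proof. by apply/ffunP => j; rewrite !ffunE; case: eqP. Qed.

Lemma card_negw_pred (A : pred (cube m)) : #|(fun w => A (negw w))| = #|A|.
Proof.
rewrite -(fintype.card_image (inv_inj (@negwK)) A); apply: eq_card => w.
by rewrite -[in RHS](negwK w) fintype.mem_image //; exact: inv_inj (@negwK).
Qed.

Definition all_ones : pred (cube m) := fun v => [forall i, v i].

Definition one_zero : pred (cube m) := fun v => #|[pred i | ~~ v i]| == 1%N.

Lemma card_all_ones : #|all_ones| = 1%N.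
Proof.
apply: (fintype.eq_card1 (x := [ffun=> true])) => v; rewrite !inE /all_ones.
apply/forallP/eqP => [v1 | ->]; last by move=> i; rewrite ffunE.
by apply/ffunP => i; rewrite ffunE v1.
Qed.

Lemma card_one_zero : #|one_zero| = m.
Proof.
pose e (i : 'I_m) : cube m := [ffun j => j != i].
have e_inj : injective e.
  by move=> i i' /ffunP /(_ i); rewrite !ffunE eqxx; case: eqP.
rewrite -[RHS]card_ord -(fintype.card_image e_inj 'I_m); apply: eq_card => v.
apply/idP/fintype.imageP => [/card1P [i vi] | [i _ ->]].
  exists i => //; apply/ffunP => j; rewrite ffunE.
  by move: (vi j); rewrite !inE => <-; rewrite negbK.
by apply/card1P; exists i => j; rewrite !inE ffunE negbK.
Qed.

Lemma one_zero_uniq (v : cube m) i j : one_zero v -> ~~ v i -> ~~ v j -> i = j.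
Proof.
move=> /card1P [i0 v0] vi vj; move: (v0 i) (v0 j).
by rewrite !inE vi vj => /esym/eqP -> /esym/eqP ->.
Qed.

Lemma one_zeroP (v : cube m) : one_zero v -> exists i, ~~ v i.
Proof. by move=> /card1P [i vi]; exists i; move: (vi i); rewrite !inE eqxx. Qed.

End Cube.

Lemma forall_in_setT (T : finType) (P : pred T) :
  [forall x in [set: T]%SET, P x] = [forall x, P x].
Proof. by apply: eq_forallb => x; move: (finset.in_setT x); rewrite unfold_in => ->. Qed.

Section Probability.
Variables (R : realType) (m : nat).
Implicit Types A B E : pred (cube m).

Lemma card_cube_gt0 : (0 < #|{: cube m}|%:R :> R).
Proof. by rewrite card_cube ltr0n expn_gt0. Qed.

Lemma prob_ge0 A : 0 <= prob R A.
Proof. by rewrite /prob divr_ge0. Qed.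

Lemma prob_le1 A : prob R A <= 1.
Proof. by rewrite /prob ler_pdivrMr ?card_cube_gt0 // mul1r ler_nat max_card. Qed.

Lemma le_prob A B : (forall w, A w -> B w) -> prob R A <= prob R B.
Proof.
move=> AB; rewrite /prob ler_pM2r ?invr_gt0 ?card_cube_gt0 // ler_nat.
by apply/subset_leq_card/fintype.subsetP => w; apply: AB.
Qed.

Lemma probC A : prob R (fun w => ~~ A w) = 1 - prob R A.
Proof.
have cardCA : (#|fun w => ~~ A w| + #|A|)%N = #|{: cube m}|.
  by rewrite addnC -(cardC A); congr (_ + _)%N; apply: eq_card.
rewrite /prob -[X in _ = X - _](divff (lt0r_neq0 card_cube_gt0)) -mulrBl; congr (_ / _).
by rewrite -cardCA natrD addrK.
Qed.

Lemma probU_le A B : prob R (fun w => A w || B w) <= prob R A + prob R B.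
Proof.
rewrite /prob -mulrDl ler_pM2r ?invr_gt0 ?card_cube_gt0 // -natrD ler_nat.
by rewrite -cardUI leq_addr.
Qed.

Lemma prob_exists_le n (A : 'I_n -> pred (cube m)) :
  prob R (fun w => [exists g, A g w]) <= \sum_g prob R (A g).
Proof.
rewrite /prob -mulr_suml ler_pM2r ?invr_gt0 ?card_cube_gt0 // -natr_sum ler_nat.
rewrite -sum1_card (eq_bigr (fun g => \sum_w (A g w : nat))); last first.
  by move=> g _; rewrite -sum1_card big_mkcond.
rewrite exchange_big /= big_mkcond /=; apply: leq_sum => w _.
rewrite /in_mem /=; case: (boolP [exists g, A g w]) => // /fintype.existsP [g Agw].
by rewrite (bigD1 g) //= Agw.
Qed.

Lemma prob_negw A : prob R (fun w => A (negw w)) = prob R A.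
Proof. by rewrite /prob card_negw_pred. Qed.

Lemma prob_cover2 E B1 B2 (x1 x2 : R) : prob R B1 <= x1 -> prob R B2 <= x2 ->
  (forall w, ~~ B1 w -> ~~ B2 w -> E w) -> 1 - (x1 + x2) <= prob R E.
Proof.
move=> B1x1 B2x2 cover.
apply: le_trans (_ : prob R (fun w => ~~ (B1 w || B2 w)) <= _).
  by rewrite probC lerB // (le_trans (probU_le _ _)) // lerD.
by apply: le_prob => w; rewrite negb_or => /andP [] /cover.
Qed.

End Probability.

Section TribesEvents.
Variables l k : nat.
Implicit Types w : cube (l * k).

Lemma tribesE w : tribes w = [exists j, all_ones (tribe_bits w j)].
Proof.
apply: eq_existsb => j; apply/forallP/forallP => wj x.
  rewrite ffunE; apply: (implyP (wj _)).
  by rewrite -[X in X == _]/(val (tribe_of _)) tribe_of_index.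
apply/implyP => /eqP xj; have <- : tribe_index j (tribe_pos x) = x.
  by rewrite -[RHS]tribe_index_of; congr tribe_index; apply: val_inj.
by move: (wj (tribe_pos x)); rewrite ffunE.
Qed.

Lemma tribes_mono w w' : (forall i, w i -> w' i) -> tribes w -> tribes w'.
Proof.
move=> ww' /existsP [j /forallP wj]; apply/existsP; exists j; apply/forallP => i.
by apply/implyP => /(implyP (wj i)) /ww'.
Qed.

Lemma one_zero_tribe w j :
  one_zero (tribe_bits w j) -> exists2 i, tribe_of i = j & ~~ w i.
Proof.
move=> /one_zeroP [b]; rewrite ffunE => wb.
by exists (tribe_index j b); rewrite ?tribe_of_index.
Qed.

Lemma tribes_flip_one_zero w i :
  one_zero (tribe_bits w (tribe_of i)) -> ~~ w i -> tribes (flip w i).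
Proof.
move=> oz wi; apply/existsP; exists (tribe_of i); apply/forallP => x.
apply/implyP => /eqP xi; rewrite ffunE; case: eqP => [-> // | /eqP x_neq_i].
have tribe_x : tribe_of x = tribe_of i by apply: val_inj.
apply: contraR x_neq_i => wx; apply/eqP.
have wx' : ~~ tribe_bits w (tribe_of i) (tribe_pos x).
  by rewrite ffunE -tribe_x tribe_index_of.
have wi' : ~~ tribe_bits w (tribe_of i) (tribe_pos i) by rewrite ffunE tribe_index_of.
by rewrite -(tribe_index_of x) -(tribe_index_of i) tribe_x (one_zero_uniq oz wx' wi').
Qed.

Lemma card_one_zero_tribes_le_pivotal w : ~~ tribes w ->
  (#|[set j | one_zero (tribe_bits w j)]%SET| <= #|pivotal (@tribes l k) w|)%N.
Proof.
move=> not_tw.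
pose S := [set i | one_zero (tribe_bits w (tribe_of i)) && ~~ w i]%SET.
have -> : [set j | one_zero (tribe_bits w j)]%SET = tribe_of @: S.
  apply/setP => j; rewrite inE; apply/idP/imsetP => [oz | [i]].
    by have [i ej wi] := one_zero_tribe oz; exists i; rewrite // inE ej oz.
  by rewrite inE => /andP [oz _] ->.
apply: leq_trans (leq_imset_card _ _) (subset_leq_card _).
apply/fintype.subsetP => i; rewrite !inE => /andP [oz wi].
by rewrite (tribes_flip_one_zero oz wi) (negbTE not_tw).
Qed.

Lemma tribes_diff_negw w : tribes_diff (negw w) = - tribes_diff w.
Proof. by rewrite /tribes_diff negwK opprB. Qed.

Lemma tribes_diff_flip_one_zero w i : ~~ tribes (negw w) ->
  one_zero (tribe_bits w (tribe_of i)) -> ~~ w i -> tribes_diff (flip w i) = 1.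
Proof.
move=> not_tnw oz wi; rewrite /tribes_diff (tribes_flip_one_zero oz wi).
suff /negbTE -> : ~~ tribes (negw (flip w i)) by [].
apply: contra not_tnw; apply: tribes_mono => x; rewrite !ffunE.
by case: eqP => [-> | _] //; rewrite negbK (negbTE wi).
Qed.

Lemma tribes_diff_bribable_at w : ~~ tribes w -> ~~ tribes (negw w) ->
  [exists j, one_zero (tribe_bits w j)] ->
  [exists j, one_zero (tribe_bits (negw w) j)] ->
  [exists i, exists j,
     (tribes_diff (flip w i) == 1) && (tribes_diff (flip w j) == -1)].
Proof.
move=> tw tnw /existsP [j1 oz1] /existsP [j2 oz2].
have [i1 ej1 wi1] := one_zero_tribe oz1; rewrite -ej1 in oz1.
have [i2 ej2 nwi2] := one_zero_tribe oz2; rewrite -ej2 in oz2.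
apply/existsP; exists i1; apply/existsP; exists i2.
rewrite (tribes_diff_flip_one_zero tnw oz1 wi1) eqxx /=.
rewrite -[w in flip w i2]negwK flip_negw tribes_diff_negw.
by rewrite (tribes_diff_flip_one_zero _ oz2 nwi2) ?negwK.
Qed.

End TribesEvents.

Section ResidueClasses.
Local Open Scope nat_scope.

Definition residue_class n a (g : 'I_a) : {set 'I_n} := [set j : 'I_n | j %% a == g]%SET.

Lemma card_residue_class n a (g : 'I_a) : n %/ a <= #|residue_class n g|.
Proof.
have a_gt0 : 0 < a by case: a g => [[]|].
have lt_n (t : 'I_(n %/ a)) : t * a + g < n.
  apply: (@leq_trans (t.+1 * a)); first by rewrite mulSnr ltn_add2l.
  by apply: leq_trans (leq_divM n a); rewrite leq_mul2r ltn_ord orbT.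
pose f (t : 'I_(n %/ a)) : 'I_n := Ordinal (lt_n t).
have f_inj : injective f.
  move=> t t' /(congr1 (fun j : 'I_n => j %/ a)) /=.
  by rewrite !divnMDl // (divn_small (ltn_ord g)) !addn0 => /val_inj.
rewrite -[X in X <= _]card_ord -(fintype.card_image f_inj).
apply/subset_leq_card/fintype.subsetP => _ /fintype.imageP [t _ ->].
by rewrite inE /= modnMDl modn_small.
Qed.

Lemma leq_card_residues n a (S : {set 'I_n}) :
  (forall g : 'I_a, exists2 j, j \in S & j %% a = g) -> a <= #|S|.
Proof.
move=> /fin_all_exists2 [f fS f_mod].
have f_inj : injective f.
  by move=> g g' efg; apply: val_inj; rewrite /= -(f_mod g) -(f_mod g') efg.
rewrite -[X in X <= _]card_ord -(fintype.card_image f_inj).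
by apply/subset_leq_card/fintype.subsetP => _ /fintype.imageP [g _ ->].
Qed.

End ResidueClasses.

Section TribesProbabilities.
Variables (R : realType) (l k : nat).

Local Notation t := (1 - (1 - ((2 ^ l)%:R)^-1) ^+ k : R).
Local Notation p := ((l%:R / (2 ^ l)%:R) : R).

Lemma prob_tribes_none (J : {set 'I_k}) (Q : pred (cube l)) :
  prob R (fun w : cube (l * k) => [forall j in J, ~~ Q (tribe_bits w j)])
  = (1 - #|Q|%:R / (2 ^ l)%:R) ^+ #|J|.
Proof.
pose F j : pred (cube l) := if j \in J then predC Q else predT.
have two_l_neq0 : (2 ^ l)%:R != 0 :> R by rewrite pnatr_eq0 expn_eq0.
have freqF j : #|F j|%:R / (2 ^ l)%:R
               = if j \in J then 1 - #|Q|%:R / (2 ^ l)%:R else 1 :> R.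
  rewrite /F; case: ifP => _; last by rewrite cardT /= -cardT card_cube divff.
  rewrite -[X in _ = X - _](divff two_l_neq0) -mulrBl; congr (_ / _).
  rewrite -card_cube -(cardC Q) natrD addrAC subrr add0r.
  by congr _%:R; apply: eq_card => v; rewrite !inE.
rewrite /prob (eq_card (B := [pred w | [forall j, F j (tribe_bits w j)]])); last first.
  by move=> w; rewrite !inE; apply: eq_forallb => j; rewrite /F; case: (j \in J).
rewrite card_tribes_family card_cube.
have -> : (2 ^ (l * k) = \prod_(j : 'I_k) 2 ^ l)%N.
  by rewrite prod_nat_const card_ord expnM.
rewrite !natr_prod -prodf_div (eq_bigr _ (fun j _ => freqF j)) -big_mkcond /=.
by rewrite prodr_const.
Qed.

Lemma prob_tribes : prob R (@tribes l k) = t.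
Proof.
have := prob_tribes_none [set: 'I_k]%SET (@all_ones l).
rewrite card_all_ones cardsT card_ord mul1r => <-.
rewrite -probC /prob; congr (_%:R / _); apply: eq_card => w.
rewrite /in_mem /= tribesE forall_in_setT negb_forall.
by apply: eq_existsb => j; rewrite negbK.
Qed.

Lemma prob_one_zero : prob R (@one_zero l) = p.
Proof. by rewrite /prob card_one_zero card_cube. Qed.

Lemma prob_no_one_zero_tribe (J : {set 'I_k}) :
  prob R (fun w : cube (l * k) => [forall j in J, ~~ one_zero (tribe_bits w j)])
  = (1 - p) ^+ #|J|.
Proof. by rewrite prob_tribes_none card_one_zero. Qed.

Lemma prob_tribes_diff_eq0_ge :
  1 - (t + t) <= prob R (fun w : cube (l * k) => tribes_diff w == 0).
Proof.
apply: (prob_cover2 (B1 := @tribes l k) (B2 := fun w => tribes (negw w))).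
- by rewrite prob_tribes.
- by rewrite prob_negw prob_tribes.
- by move=> w /negbTE t_w /negbTE tn_w; rewrite /tribes_diff t_w tn_w.
Qed.

Lemma prob_bribe_ge :
  1 - ((t + t) + ((1 - p) ^+ k + (1 - p) ^+ k)) <=
  prob R (fun w : cube (l * k) => [exists i, exists j,
     (tribes_diff (flip w i) == 1) && (tribes_diff (flip w j) == -1)]).
Proof.
pose no_one_zero (w : cube (l * k)) :=
  [forall j in [set: 'I_k]%SET, ~~ one_zero (tribe_bits w j)].
have Pnz : prob R no_one_zero = (1 - p) ^+ k.
  by rewrite prob_no_one_zero_tribe cardsT card_ord.
have Pnzn : prob R (fun w => no_one_zero (negw w)) = (1 - p) ^+ k.
  by rewrite prob_negw.
have Ptn : prob R (fun w : cube (l * k) => tribes (negw w)) = t.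
  by rewrite prob_negw prob_tribes.
apply: (prob_cover2 (B1 := fun w => tribes w || tribes (negw w))
                    (B2 := fun w => no_one_zero w || no_one_zero (negw w))).
- by rewrite -{1}prob_tribes -Ptn probU_le.
- by rewrite -{1}Pnz -Pnzn probU_le.
- move=> w; rewrite !negb_or /no_one_zero !forall_in_setT !negb_forall.
  move=> /andP [tw tnw] /andP [oz ozn]; apply: tribes_diff_bribable_at => //.
    by under eq_existsb do rewrite -[one_zero _]negbK.
  by under eq_existsb do rewrite -[one_zero _]negbK.
Qed.

Lemma prob_pivotal_ge A : (0 < A)%N ->
  1 - (t + A%:R * (1 - p) ^+ (k %/ A)) <=
  prob R (fun w : cube (l * k) => (A <= #|pivotal (@tribes l k) w|)%N).
Proof.
move=> A_gt0.
pose miss (w : cube (l * k)) := [exists g : 'I_A,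
  [forall j in residue_class k g, ~~ one_zero (tribe_bits w j)]].
have p_le1 : p <= 1 by rewrite -prob_one_zero prob_le1.
have p_ge0 : 0 <= p by rewrite -prob_one_zero prob_ge0.
apply: (prob_cover2 (B1 := @tribes l k) (B2 := miss)).
- by rewrite prob_tribes.
- apply: le_trans (prob_exists_le _ _) _.
  under eq_bigr do rewrite prob_no_one_zero_tribe.
  apply: le_trans (_ : \sum_(g < A) (1 - p) ^+ (k %/ A) <= _).
    apply: ler_sum => g _; apply: ler_wiXn2l (card_residue_class k g).
      by rewrite subr_ge0.
    by rewrite lerBlDr lerDl.
  by rewrite sumr_const card_ord [X in _ <= X]mulr_natl.
- move=> w /negbTE tw; rewrite /miss negb_exists => /forallP no_miss.
  apply: leq_trans (card_one_zero_tribes_le_pivotal (negbT tw)).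
  apply: leq_card_residues => g; move: (no_miss g); rewrite negb_forall.
  move=> /existsP [j]; rewrite negb_imply negbK => /andP [jg oz].
  by exists j; rewrite ?inE //; move: jg; rewrite inE => /eqP.
Qed.

End TribesProbabilities.

Section TribesSymmetry.
Variables l k : nat.
Local Open Scope nat_scope.

Definition tribe_perms : {set {perm 'I_(l * k)}} :=
  [set s : {perm 'I_(l * k)} | [forall x, forall y,
    (tribe_of (s x) == tribe_of (s y)) == (tribe_of x == tribe_of y)]]%SET.

Lemma tribe_permsP s x y : s \in tribe_perms ->
  (tribe_of (s x) == tribe_of (s y)) = (tribe_of x == tribe_of y).
Proof. by rewrite inE => /forallP /(_ x) /forallP /(_ y) /eqP. Qed.

Lemma tribe_perms_group_set : group_set tribe_perms.
Proof.
apply/group_setP; split.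
  by rewrite inE; apply/forallP => x; apply/forallP => y; rewrite !perm1.
move=> s t s_pres t_pres; rewrite inE; apply/forallP => x; apply/forallP => y.
by rewrite !permM (tribe_permsP _ _ t_pres) (tribe_permsP _ _ s_pres).
Qed.

Canonical tribe_perms_group := Group tribe_perms_group_set.

Lemma tribes_perm_imply s (w : cube (l * k)) : 0 < l -> s \in tribe_perms ->
  tribes [ffun i => w (s i)] -> tribes w.
Proof.
move=> l_gt0 s_pres /existsP [j /forallP tribe_j].
pose x0 := tribe_index j (Ordinal l_gt0).
apply/existsP; exists (tribe_of (s x0)); apply/forallP => y; apply/implyP => y_x0.
have : tribe_of (s (s^-1 y)%g) == tribe_of (s x0) by rewrite permKV.
rewrite tribe_permsP // tribe_of_index => /(implyP (tribe_j _)).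
by rewrite ffunE permKV.
Qed.

Lemma tribes_perm s (w : cube (l * k)) : 0 < l -> s \in tribe_perms ->
  tribes [ffun i => w (s i)] = tribes w.
Proof.
move=> l_gt0 s_pres; apply/idP/idP; first exact: tribes_perm_imply.
have sV_pres : (s^-1)%g \in tribe_perms.
  by rewrite -[tribe_perms]/(gval tribe_perms_group) groupV.
move=> tw; apply: (tribes_perm_imply (s := (s^-1)%g)) => //.
suff -> : [ffun i => [ffun i => w (s i)] ((s^-1)%g i)] = w by [].
by apply/ffunP => i; rewrite !ffunE permKV.
Qed.

Lemma tribe_perm_subproof (sigma : {perm 'I_k}) (tau : {perm 'I_l}) :
  injective (fun i => tribe_index (sigma (tribe_of i)) (tau (tribe_pos i))).
Proof.
move=> x y /[dup] /(congr1 tribe_of) + /(congr1 tribe_pos).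
rewrite !tribe_of_index !tribe_pos_index => /perm_inj ex /perm_inj ey.
by rewrite -(tribe_index_of x) ex ey tribe_index_of.
Qed.

Definition tribe_perm sigma tau : {perm 'I_(l * k)} :=
  perm (@tribe_perm_subproof sigma tau).

Lemma tribe_perm_in sigma tau : tribe_perm sigma tau \in tribe_perms.
Proof.
rewrite inE; apply/forallP => x; apply/forallP => y.
by rewrite !permE !tribe_of_index (inj_eq perm_inj).
Qed.

Lemma tribe_perms_transitive : 0 < l -> 0 < k ->
  [transitive tribe_perms_group, on [set: 'I_(l * k)]%SET | 'P].
Proof.
move=> l_gt0 k_gt0; pose x0 := tribe_index (Ordinal k_gt0) (Ordinal l_gt0).
apply/imsetP; exists x0; first by rewrite finset.in_setT.
apply/esym/setP => y; rewrite finset.in_setT; apply/orbitP.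
exists (tribe_perm (tperm (tribe_of x0) (tribe_of y))
                   (tperm (tribe_pos x0) (tribe_pos y))); first exact: tribe_perm_in.
by rewrite /= apermE permE !tpermL tribe_index_of.
Qed.

Lemma tribes_diff_transitive : 0 < l -> 0 < k -> transitive_fun (@tribes_diff l k).
Proof.
move=> l_gt0 k_gt0; exists tribe_perms_group; split; first exact: tribe_perms_transitive.
move=> s s_pres w; rewrite /tribes_diff.
have -> : negw [ffun i => w (s i)] = [ffun i => negw w (s i)].
  by apply/ffunP => i; rewrite !ffunE.
by rewrite !tribes_perm.
Qed.

End TribesSymmetry.

Lemma bernoulli_inequality (R : realFieldType) (p : R) m : 0 <= p -> p <= 1 ->
  (1 - p) ^+ m * (1 + m%:R * p) <= 1.
Proof.
move=> p_ge0 p_le1; elim: m => [|m IHm]; first by rewrite expr0 mul0r addr0 mul1r.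
apply: le_trans IHm; rewrite exprSr -mulrA ler_wpM2l ?exprn_ge0 ?subr_ge0 //.
have : 0 <= m%:R :> R by []. rewrite -natr1; nra.
Qed.

Lemma natr_mul_expr1B_divn_le_inv (R : realFieldType) (p : R) (n a : nat) :
  (0 < a)%N -> 0 <= p -> p <= 1 -> a%:R ^+ 4 <= n%:R * p ->
  a%:R * (1 - p) ^+ (n %/ a) <= a%:R^-1.
Proof.
move=> a_gt0 p_ge0 p_le1 a4_le.
set q := (n %/ a)%N; set x := a%:R : R.
have x_ge1 : 1 <= x by rewrite ler1n.
(* x^4 <= n p <= (1 + q p) x, as n < (q + 1) x and p <= 1. *)
have n_le : n%:R <= (q%:R + 1) * x :> R.
  by rewrite natr1 -natrM ler_nat ltnW // ltn_ceil.
have x3_le : x ^+ 3 * x <= (1 + q%:R * p) * x.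
  by rewrite -exprSr; apply: le_trans a4_le _; have : 0 <= q%:R :> R by []; nra.
rewrite ler_pM2r ?(lt_le_trans ltr01) // in x3_le.
have x2_le : x ^+ 2 <= 1 + q%:R * p.
  apply: le_trans x3_le.
  by rewrite [X in _ <= X]exprSr ler_peMr ?exprn_ge0 ?(le_trans ler01).
have e_ge0 : 0 <= (1 - p) ^+ q by rewrite exprn_ge0 // subr_ge0.
rewrite -[X in _ <= X]div1r ler_pdivlMr ?(lt_le_trans ltr01) // mulrAC -expr2 mulrC.
by apply: le_trans (bernoulli_inequality q p_ge0 p_le1); apply: ler_wpM2l.
Qed.

Lemma cvgry_nat_fourth_root (R : realType) (mu : nat -> R) : mu @ \oo --> +oo ->
  exists a : nat -> nat, [/\ forall n, (0 < a n)%N,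
    (fun n => (a n)%:R : R) @ \oo --> +oo &
    \forall n \near \oo, ((a n).+1%:R : R) ^+ 4 <= mu n].
Proof.
move=> /cvgryPge mu_oo.
pose r n := Num.sqrt (Num.sqrt (mu n)).
have r_ge0 n : 0 <= r n by apply: sqrtr_ge0.
have r_ge n x : 0 <= x -> x ^+ 4 <= mu n -> x <= r n.
  move=> x_ge0 x4_le; have mu_ge0 : 0 <= mu n by apply: le_trans x4_le; rewrite exprn_ge0.
  rewrite -[x in x <= _](_ : Num.sqrt (Num.sqrt (x ^+ 4)) = x).
    by rewrite ler_sqrt ?sqrtr_ge0 // ler_sqrt.
  by rewrite -[4%N]/(2 * 2)%N exprM sqrtr_sqr ger0_norm ?exprn_ge0 // sqrtr_sqr ger0_norm.
have r4 n : 0 <= mu n -> r n ^+ 4 = mu n.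
  by move=> mu_ge0; rewrite -[4%N]/(2 * 2)%N exprM !sqr_sqrtr ?sqrtr_ge0.
exists (fun n => maxn 1 (Num.truncn (r n)).-1); split.
- by move=> n; rewrite leq_maxl.
- apply/cvgryPge => M; near=> n.
  have M_le : `|M| + 2 <= r n.
    by apply: r_ge; rewrite ?addr_ge0 //; near: n; apply: mu_oo.
  have r_lt := truncnS_gt (r n); rewrite -natr1 in r_lt.
  have tr_le : (Num.truncn (r n))%:R <= ((Num.truncn (r n)).-1)%:R + 1 :> R.
    by rewrite natr1 ler_nat leqSpred.
  have tr_max : ((Num.truncn (r n)).-1)%:R <= (maxn 1 (Num.truncn (r n)).-1)%:R :> R.
    by rewrite ler_nat leq_maxr.
  have := ler_norm M; lra.
- near=> n.
  have mu_ge : 2 ^+ 4 <= mu n by near: n; apply: mu_oo.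
  have mu_ge0 : 0 <= mu n by apply: le_trans mu_ge; rewrite exprn_ge0.
  have tr_ge2 : (2 <= Num.truncn (r n))%N by rewrite truncn_ge_nat // r_ge.
  rewrite (maxn_idPr _); last by rewrite -ltnS (ltn_predK tr_ge2).
  rewrite (ltn_predK tr_ge2) -(r4 n mu_ge0) lerXn2r ?nnegrE ?truncn_le //.
Unshelve. all: by end_near.
Qed.

Lemma addr_cvg0 (R : realFieldType) (f g : nat -> R) :
  f @ \oo --> (0 : R) -> g @ \oo --> (0 : R) -> (fun n => f n + g n) @ \oo --> (0 : R).
Proof. by move=> f0 g0; rewrite -(addr0 (0 : R)); apply: cvgD. Qed.

Lemma expr1B_cvg0 (R : realType) (p : nat -> R) (m : nat -> nat) :
  (forall n, 0 <= p n <= 1) -> (fun n => (m n)%:R * p n) @ \oo --> +oo ->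
  (fun n => (1 - p n) ^+ m n) @ \oo --> (0 : R).
Proof.
move=> p01 mp_oo; have mp1_gt0 n : 0 < 1 + (m n)%:R * p n.
  by case/andP: (p01 n) => p_ge0 _; rewrite ltr_wpDr ?mulr_ge0.
apply: (@squeeze_cvgr _ _ _ _ (fun=> 0) (fun n => (1 + (m n)%:R * p n)^-1)).
- near=> n; case/andP: (p01 n) => p_ge0 p_le1.
  rewrite exprn_ge0 ?subr_ge0 //= -div1r ler_pdivlMr //.
  exact: bernoulli_inequality.
- exact: cvg_cst.
- apply/(gtr0_cvgV0 (f := fun n => 1 + (m n)%:R * p n)); first by near=> n.
  by apply: ger_cvgy mp_oo; near=> n; rewrite lerDr.
Unshelve. all: by end_near.
Qed.

Lemma invr_natS_cvg0 (R : realType) (a : nat -> nat) :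
  (fun n => (a n)%:R : R) @ \oo --> +oo ->
  (fun n => ((a n).+1%:R : R)^-1) @ \oo --> (0 : R).
Proof.
move=> a_oo; apply/(gtr0_cvgV0 (f := fun n => ((a n).+1%:R : R))).
  by near=> n.
by apply: ger_cvgy a_oo; near=> n; rewrite ler_nat.
Unshelve. all: by end_near.
Qed.

Lemma prob_cvg1 (R : realType) (m : nat -> nat) (A : forall n, pred (cube (m n)))
    (e : nat -> R) :
  e @ \oo --> (0 : R) -> (\forall n \near \oo, 1 - e n <= prob R (A n)) ->
  (fun n => prob R (A n)) @ \oo --> (1 : R).
Proof.
move=> e0 A_ge.
apply: (@squeeze_cvgr _ _ _ _ (fun n => 1 - e n) (fun=> 1)).
- by near=> n; rewrite prob_le1 andbT; near: n.
- by rewrite -[X in _ --> X]subr0; apply: cvgB => //; exact: cvg_cst.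
- exact: cvg_cst.
Unshelve. all: by end_near.
Qed.

Theorem proposition1 (R : realType) (l k : nat -> nat)
  (hl : forall n, (0 < l n)%N) (hk : forall n, (0 < k n)%N)
  (h1 : (fun n => (1 - ((2 ^ l n)%:R : R)^-1) ^+ k n) @ \oo --> (1 : R))
  (h2 : (fun n => ((k n * l n)%:R / (2 ^ l n)%:R : R)) @ \oo --> +oo) :
  bribable R (fun n => tribes_diff (l := l n) (k := k n)) /\
  exists a : nat -> nat,
    (forall n, (0 < a n)%N) /\
    (fun n => (a n)%:R : R) @ \oo --> +oo /\
    (fun n => prob R (fun w : cube (l n * k n) =>
        (a n < #|pivotal (@tribes (l n) (k n)) w|)%N)) @ \oo --> (1 : R).
Proof.
pose t n : R := 1 - (1 - ((2 ^ l n)%:R)^-1) ^+ k n.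
pose p n : R := (l n)%:R / (2 ^ l n)%:R.
pose s n : R := (1 - p n) ^+ k n.
have p01 n : 0 <= p n <= 1 by rewrite /p -(prob_one_zero R) prob_ge0 prob_le1.
have muE n : (k n * l n)%:R / (2 ^ l n)%:R = (k n)%:R * p n :> R.
  by rewrite /p natrM mulrA.
have t0 : t @ \oo --> (0 : R).
  by rewrite -(subrr (1 : R)); apply: cvgB => //; exact: cvg_cst.
have s0 : s @ \oo --> (0 : R).
  by apply: expr1B_cvg0 => //; under eq_fun do rewrite -muE.
have [a [a_gt0 a_oo a4_le]] := cvgry_nat_fourth_root h2.
split; first split.
- by move=> n; apply: tribes_diff_transitive.
- apply: (prob_cvg1 (e := fun n => t n + t n)); first exact: addr_cvg0.
  by near=> n; apply: prob_tribes_diff_eq0_ge.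
- apply: (prob_cvg1 (e := fun n => (t n + t n) + (s n + s n))).
    by apply: addr_cvg0; apply: addr_cvg0.
  by near=> n; apply: prob_bribe_ge.
exists a; do !split => //.
apply: (prob_cvg1 (e := fun n => t n + ((a n).+1%:R)^-1)).
  by apply: addr_cvg0 => //; apply: invr_natS_cvg0.
near=> n; apply: le_trans (prob_pivotal_ge R (l n) (k n) (ltn0Sn (a n))).
case/andP: (p01 n) => p_ge0 p_le1.
rewrite lerB // lerD // natr_mul_expr1B_divn_le_inv // -/(p n) -muE.
by near: n.
Unshelve. all: by end_near.
Qed.
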